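(* Let $G_{\lambda,k}$ be a skeleton of a graph $G$ such that $G_{(\lambda,k)_{(2,2)}}$ contains an $M$-fat $H$ minor for some $M\ge6$. Then $G_{\lambda,k}$ contains an $(M+1)$-fat $H$ minor.
   Context: All graphs are connected (and unbounded); $d$ is the graph metric. Sets $X,Y$ are $r$-disjoint if $d(a,b)>r$ for all $a\in X,b\in Y$; $X$ is $k$-connected if any two of its points are joined by a finite sequence in $X$ with consecutive distances $\le k$. $H$ is an $M$-fat minor of a graph $\Gamma$ if there are connected subgraphs $B_v$ ($v\in V(H)$) and paths $P_e$ ($e\in E(H)$), $P_e$ joining $B_u$ to $B_v$ for $e=uv$, any two of which are $M$-disjoint unless they correspond to an incident vertex–edge pair of $H$. Skeleton $\Gamma_{\lambda,k}$ of a connected graph $\Gamma$ (root $x_0$, scale $\lambda\ge1$, connectivity $k\ge1$): layers $A_{N,\lambda}=\{x: N\lambda<d(x,x_0)\le(N+1)\lambda\}$, $N\in\mathbb Z$; blocks are maximal $k$-connected subsets of layers; $\Gamma_{\lambda,k}$ has a vertex per block and an edge between two blocks iff an edge of $\Gamma$ joins them. $G_{(\lambda,k)_{(2,2)}}$ is the $(2,2)$-skeleton of the graph $G_{\lambda,k}$, rooted at the block containing the root of $G$. *)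

From Stdlib Require Import Reals List Relations.
Import ListNotations.
Open Scope R_scope.

Section Graphs.
Variable V : Type.
Variable adj : V -> V -> Prop.

Definition simple_graph : Prop :=
  (forall x y, adj x y -> adj y x) /\ (forall x, ~ adj x x).

Inductive walkn : V -> V -> nat -> Prop :=
| walkn0 x : walkn x x 0
| walknS x y z n : adj x y -> walkn y z n -> walkn x z (S n).

Definition connected_graph : Prop := forall x y, exists n, walkn x y n.

Definition dist_le (x y : V) (n : nat) : Prop := exists m, (m <= n)%nat /\ walkn x y m.

Definition dist_eq (x y : V) (n : nat) : Prop :=
  walkn x y n /\ forall m, walkn x y m -> (n <= m)%nat.

Definition unbounded_graph (x0 : V) : Prop := forall n, exists x, ~ dist_le x0 x n.

Definition r_disjoint (r : nat) (X Y : V -> Prop) : Prop :=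
  forall a b, X a -> Y b -> ~ dist_le a b r.

(* X is k-connected: any two points joined by a finite sequence in X with
   consecutive distances <= k (distances measured in the ambient graph) *)
Definition k_connected (k : nat) (X : V -> Prop) : Prop :=
  forall x y, X x -> X y ->
    clos_refl_trans V (fun a b => X a /\ X b /\ dist_le a b k) x y.

Definition connected_subgraph (X : V -> Prop) : Prop :=
  (exists x, X x) /\
  forall x y, X x -> X y ->
    clos_refl_trans V (fun a b => X a /\ X b /\ adj a b) x y.

Fixpoint chain (l : list V) : Prop :=
  match l with
  | [] => True
  | x :: l' => match l' with [] => True | y :: _ => adj x y /\ chain l' end
  end.

Definition path_joining (p : list V) (X Y : V -> Prop) : Prop :=
  exists x y, hd_error p = Some x /\ last p x = y /\ X x /\ Y y /\
  NoDup p /\ chain p.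

Definition layer (x0 : V) (lam : R) (N : Z) (x : V) : Prop :=
  exists n, dist_eq x0 x n /\ IZR N * lam < INR n /\ INR n <= (IZR N + 1) * lam.

Definition is_block (x0 : V) (lam : R) (k : nat) (B : V -> Prop) : Prop :=
  exists N : Z,
    (forall x, B x -> layer x0 lam N x) /\
    (exists x, B x) /\
    k_connected k B /\
    (forall Y : V -> Prop, (forall x, B x -> Y x) -> (forall x, Y x -> layer x0 lam N x) ->
       k_connected k Y -> forall x, Y x -> B x).

End Graphs.

Definition skel_vert (V : Type) (adj : V -> V -> Prop) (x0 : V) (lam : R) (k : nat) : Type :=
  { B : V -> Prop | is_block V adj x0 lam k B }.

Definition skel_adj (V : Type) (adj : V -> V -> Prop) (x0 : V) (lam : R) (k : nat)
  (B C : skel_vert V adj x0 lam k) : Prop :=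
  proj1_sig B <> proj1_sig C /\
  exists x y, proj1_sig B x /\ proj1_sig C y /\ adj x y.

Definition fat_minor (VH : Type) (adjH : VH -> VH -> Prop)
  (V : Type) (adj : V -> V -> Prop) (M : nat) : Prop :=
  exists (B : VH -> V -> Prop) (P : VH -> VH -> list V),
    (forall v, connected_subgraph V adj (B v)) /\
    (forall u v, adjH u v -> path_joining V adj (P u v) (B u) (B v) /\ P v u = rev (P u v)) /\
    (forall u v, u <> v -> r_disjoint V adj M (B u) (B v)) /\
    (* edge / edge, for distinct edges {u,v} <> {u',v'} *)
    (forall u v u' v', adjH u v -> adjH u' v' ->
       ~ ((u = u' /\ v = v') \/ (u = v' /\ v = u')) ->
       r_disjoint V adj M (fun x => In x (P u v)) (fun x => In x (P u' v'))) /\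
    (forall w u v, adjH u v -> w <> u -> w <> v ->
       r_disjoint V adj M (B w) (fun x => In x (P u v))).

From Stdlib Require Import Reals List Relations Arith ZArith Lia Lra.
From Stdlib Require Import Classical ClassicalEpsilon ProofIrrelevance
  FunctionalExtensionality PropExtensionality.
Import ListNotations.

(* In the (2,2)-skeleton of a graph G (layers of width 2, blocks 2-connected),
   every vertex lies in exactly one block, and of any three consecutive
   vertices of a walk two lie in a common layer at distance at most 2, hence in
   a common block.  So a walk of length L in G between two blocks projects to a
   walk of length at most ceil(L/2) in the skeleton.  Replace every branch set
   and every path of blocks of the minor by the closed 1-neighbourhood in G of
   the union of its blocks: it is connected, since two points of a block at
   distance 2 are joined through a midpoint within distance 1 of the block, and
   it contains a path of G, which can be chosen consistently with reversal.
   Points of two thickened sets at distance at most M+1 come from blocks joined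
   by a walk of length at most M+3, so these blocks are at skeleton distance at
   most M as soon as M >= 3. *)

Definition restrict {T : Type} (R : relation T) (Z : T -> Prop) : relation T :=
  fun a b => Z a /\ Z b /\ R a b.

Section Closures.
Context {T : Type}.

Lemma clos_rt_lift (R1 R2 : relation T) :
  (forall x y, R1 x y -> clos_refl_trans T R2 x y) ->
  inclusion T (clos_refl_trans T R1) (clos_refl_trans T R2).
Proof. intros H x y Hxy; induction Hxy; eauto using rt_refl, rt_trans. Qed.

Lemma clos_rt_mono (R1 R2 : relation T) :
  inclusion T R1 R2 -> inclusion T (clos_refl_trans T R1) (clos_refl_trans T R2).
Proof. intros H; apply clos_rt_lift; auto using rt_step. Qed.

Lemma clos_rt_sym (R : relation T) :
  symmetric T R -> symmetric T (clos_refl_trans T R).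
Proof. intros H x y Hxy; induction Hxy; eauto using rt_step, rt_refl, rt_trans. Qed.

Lemma restrict_sym (R : relation T) (Z : T -> Prop) :
  symmetric T R -> symmetric T (restrict R Z).
Proof. intros H a b (Za & Zb & Rab); repeat split; auto. Qed.

Lemma clos_rt_restrict_closed (R : relation T) (Z : T -> Prop) x y :
  clos_refl_trans T (restrict R Z) x y -> Z x -> Z y.
Proof. induction 1 as [x y (_ & Zy & _)| |]; auto. Qed.

Lemma clos_rt_restrict_union (R : relation T) (Y Z : T -> Prop) a :
  Y a -> Z a ->
  (forall x y, Y x -> Y y -> clos_refl_trans T (restrict R Y) x y) ->
  (forall x y, Z x -> Z y -> clos_refl_trans T (restrict R Z) x y) ->
  forall x y, Y x \/ Z x -> Y y \/ Z y ->
  clos_refl_trans T (restrict R (fun x => Y x \/ Z x)) x y.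
Proof.
  intros Ya Za HY HZ.
  assert (LY : forall x y, Y x -> Y y ->
            clos_refl_trans T (restrict R (fun x => Y x \/ Z x)) x y).
  { intros x y Hx Hy; apply (clos_rt_mono (restrict R Y)); [firstorder | auto]. }
  assert (LZ : forall x y, Z x -> Z y ->
            clos_refl_trans T (restrict R (fun x => Y x \/ Z x)) x y).
  { intros x y Hx Hy; apply (clos_rt_mono (restrict R Z)); [firstorder | auto]. }
  intros x y [Hx|Hx] [Hy|Hy]; eauto using rt_trans.
Qed.

Lemma clos_rt_restrict_class (R : relation T) (Z : T -> Prop) p :
  symmetric T R ->
  forall x y, clos_refl_trans T (restrict R Z) p x -> clos_refl_trans T (restrict R Z) p y ->
  clos_refl_trans T (restrict R (clos_refl_trans T (restrict R Z) p)) x y.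
Proof.
  intros Rsym.
  set (C := clos_refl_trans T (restrict R Z) p).
  assert (Hp : forall q, C q -> clos_refl_trans T (restrict R C) p q).
  { intros q Hq. apply clos_rt_rtn1 in Hq as Hq'.
    induction Hq' as [|y z (_ & _ & Ryz) Hpy IH]; [apply rt_refl|].
    assert (Cy : C y) by (apply clos_rtn1_rt; auto).
    apply rt_trans with y; [apply IH; auto|].
    apply rt_step; repeat split; auto. }
  intros x y Hx Hy. apply rt_trans with p; auto.
  apply clos_rt_sym; [apply restrict_sym; auto | auto].
Qed.

End Closures.

Section Walks.
Context {X : Type} {A : X -> X -> Prop}.
Hypothesis A_sym : symmetric X A.

Lemma walkn_app x y z m n : walkn X A x y m -> walkn X A y z n -> walkn X A x z (m + n).
Proof. induction 1; simpl; [auto | econstructor; eauto]. Qed.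

Lemma walkn_snoc x y z n : walkn X A x y n -> A y z -> walkn X A x z (S n).
Proof.
  intros Hw Hyz. rewrite <- Nat.add_1_r. apply walkn_app with y; [exact Hw|].
  econstructor; [exact Hyz | constructor].
Qed.

Lemma walkn_rev x y n : walkn X A x y n -> walkn X A y x n.
Proof. induction 1; [constructor | eapply walkn_snoc; eauto]. Qed.

Lemma dist_le_refl x n : dist_le X A x x n.
Proof. exists 0%nat; split; [lia | constructor]. Qed.

Lemma dist_le_adj x y : A x y -> dist_le X A x y 1.
Proof. exists 1%nat; split; [lia|]. econstructor; eauto using walkn0. Qed.

Lemma dist_le_sym x y n : dist_le X A x y n -> dist_le X A y x n.
Proof. intros (m & Hm & Hw). exists m; auto using walkn_rev. Qed.

Lemma dist_le_trans x y z m n :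
  dist_le X A x y m -> dist_le X A y z n -> dist_le X A x z (m + n).
Proof.
  intros (a & Ha & Hxy) (b & Hb & Hyz). exists (a + b)%nat.
  split; [lia | eapply walkn_app; eauto].
Qed.

Lemma dist_le_mono x y m n : dist_le X A x y m -> (m <= n)%nat -> dist_le X A x y n.
Proof. intros (a & Ha & Hw) Hmn. exists a; split; [lia | auto]. Qed.

Lemma dist_eq_unique x y m n : dist_eq X A x y m -> dist_eq X A x y n -> m = n.
Proof. intros [Hm Hmin] [Hn Hnmin]. specialize (Hmin _ Hn). specialize (Hnmin _ Hm). lia. Qed.

Lemma dist_eq_of_walkn x y n : walkn X A x y n -> exists m, dist_eq X A x y m.
Proof.
  induction n as [n IH] using lt_wf_ind; intros Hw.
  destruct (classic (forall m, walkn X A x y m -> (n <= m)%nat)) as [Hmin|Hmin].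
  - exists n; split; auto.
  - apply not_all_ex_not in Hmin as [m Hm]. apply imply_to_and in Hm as [Hw' Hlt].
    apply (IH m); [lia | exact Hw'].
Qed.

Lemma dist_eq_adj r a p n :
  dist_eq X A r a n -> A a p ->
  exists m, dist_eq X A r p m /\ (m <= S n)%nat /\ (n <= S m)%nat.
Proof.
  intros [Ha Hamin] Hap.
  assert (Hw : walkn X A r p (S n)) by exact (walkn_snoc _ _ _ _ Ha Hap).
  destruct (dist_eq_of_walkn r p (S n) Hw) as [m [Hp Hpmin]].
  exists m; split; [split; auto|]. split.
  - exact (Hpmin _ Hw).
  - exact (Hamin _ (walkn_snoc _ _ _ _ Hp (A_sym _ _ Hap))).
Qed.

Lemma r_disjoint_mono M (Y Z Y' Z' : X -> Prop) :
  r_disjoint X A M Y Z -> (forall x, Y' x -> Y x) -> (forall x, Z' x -> Z x) ->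
  r_disjoint X A M Y' Z'.
Proof. intros H HY HZ a b Ha Hb; apply H; auto. Qed.

Lemma k_connected_union k (Y Z : X -> Prop) a :
  k_connected X A k Y -> k_connected X A k Z -> Y a -> Z a ->
  k_connected X A k (fun x => Y x \/ Z x).
Proof. intros HY HZ Ya Za. exact (clos_rt_restrict_union _ Y Z a Ya Za HY HZ). Qed.

End Walks.

Section Chains.
Context {T : Type} {R : relation T}.

Lemma chain_app_r l1 l2 : chain T R (l1 ++ l2) -> chain T R l2.
Proof.
  induction l1 as [|a l1 IH]; simpl; [auto|].
  intros H; apply IH. destruct (l1 ++ l2); tauto.
Qed.

Lemma chain_app l1 l2 a :
  chain T R (l1 ++ [a]) -> chain T R (a :: l2) -> chain T R (l1 ++ a :: l2).
Proof.
  induction l1 as [|b [|c l1] IH]; simpl; [auto | tauto |].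
  intros [Hbc H] H2. split; [exact Hbc | apply IH; auto].
Qed.

Lemma chain_rev : symmetric T R -> forall l, chain T R l -> chain T R (rev l).
Proof.
  intros Rsym.
  assert (G : forall l a, chain T R (a :: l) -> chain T R (rev l ++ [a])).
  { induction l as [|b l IH]; intros a H; simpl; [auto|].
    destruct H as [Hab H]. rewrite <- app_assoc. apply chain_app; [apply IH; auto|].
    simpl; auto. }
  intros [|a l]; simpl; auto.
Qed.

Lemma last_indep (l : list T) d d' : l <> [] -> last l d = last l d'.
Proof.
  induction l as [|a [|b l] IH]; intros H; [congruence | reflexivity |].
  apply IH; discriminate.
Qed.

Lemma last_app_cons (l1 l2 : list T) x d : last (l1 ++ x :: l2) d = last (x :: l2) d.
Proof.
  induction l1 as [|a l1 IH]; [reflexivity|].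
  simpl. rewrite IH. destruct l1; reflexivity.
Qed.

Lemma in_last (l : list T) d : l <> [] -> In (last l d) l.
Proof.
  induction l as [|a [|b l] IH]; intros H; [congruence | left; reflexivity |].
  right. apply IH; discriminate.
Qed.

Lemma path_joining_rev (Y Z : T -> Prop) l :
  symmetric T R -> path_joining T R l Y Z -> path_joining T R (rev l) Z Y.
Proof.
  intros Rsym (x & y & Hh & Hl & Yx & Zy & Hnd & Hc).
  destruct l as [|a l']; [discriminate|]. injection Hh as ->.
  exists y, x. repeat split; auto.
  - destruct (exists_last (l := x :: l') ltac:(discriminate)) as (l0 & b & E).
    rewrite E in Hl |- *. rewrite last_last in Hl. subst b.
    rewrite rev_app_distr. reflexivity.
  - apply last_last.
  - apply NoDup_rev; auto.
  - apply chain_rev; auto.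
Qed.

Lemma clos_rt_of_chain (Z : T -> Prop) l x :
  chain T R l -> hd_error l = Some x -> (forall z, In z l -> Z z) ->
  forall z, In z l -> clos_refl_trans T (restrict R Z) x z.
Proof.
  revert x. induction l as [|a l IH]; intros x Hc Hh HZ z Hz; [destruct Hz|].
  injection Hh as <-. destruct Hz as [<-|Hz]; [apply rt_refl|].
  destruct l as [|b l]; [destruct Hz|]. destruct Hc as [Hab Hc].
  apply rt_trans with b.
  - apply rt_step; repeat split; auto; apply HZ; simpl; auto.
  - apply IH; auto. intros w Hw; apply HZ; right; auto.
Qed.

(* Loop erasure. *)
Lemma path_of_clos_rt (Z : T -> Prop) x y :
  clos_refl_trans T (restrict R Z) x y -> Z x ->
  exists p, hd_error p = Some x /\ last p x = y /\ NoDup p /\ chain T R p /\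
    (forall z, In z p -> Z z).
Proof.
  intros H. apply clos_rt_rt1n in H.
  induction H as [x|x z y (_ & Zz & Rxz) _ IH]; intros Zx.
  - exists [x]; simpl. repeat split; auto using NoDup_cons, NoDup_nil. intros z [<-|[]]; auto.
  - destruct (IH Zz) as ([|z' p] & Hh & Hl & Hnd & Hc & HZ); [discriminate|].
    injection Hh as ->.
    destruct (classic (In x (z :: p))) as [Hin|Hnin].
    + apply in_split in Hin as (l1 & l2 & E). rewrite E in Hl, Hnd, Hc, HZ.
      exists (x :: l2). split; [reflexivity|]. split; [|split; [|split]].
      * rewrite last_app_cons in Hl. rewrite <- Hl. apply last_indep. discriminate.
      * eapply NoDup_app_remove_l; eauto.
      * eapply chain_app_r; eauto.
      * intros w Hw. apply HZ, in_or_app. right; auto.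
    + exists (x :: z :: p). split; [reflexivity|]. split; [|split; [|split]].
      * rewrite <- Hl. apply (last_indep (z :: p)). discriminate.
      * constructor; auto.
      * split; auto.
      * intros w [<-|Hw]; auto.
Qed.

End Chains.

Section Orientation.
Context {I : Type}.

Definition orient (u v : I) : I * I :=
  epsilon (inhabits (u, v)) (fun e => e = (u, v) \/ e = (v, u)).

Lemma orient_spec u v : orient u v = (u, v) \/ orient u v = (v, u).
Proof. unfold orient. apply epsilon_spec. eauto. Qed.

Lemma orient_comm u v : orient u v = orient v u.
Proof.
  unfold orient. rewrite (proof_irrelevance _ (inhabits (u, v)) (inhabits (v, u))).
  f_equal. apply functional_extensionality; intro e.
  apply propositional_extensionality; tauto.
Qed.

Lemma reversible_choice (E : I -> I -> Prop) {T : Type} (good : I -> I -> list T -> Prop) :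
  simple_graph I E ->
  (forall u v p, E u v -> good u v p -> good v u (rev p)) ->
  (forall u v, E u v -> exists p, good u v p) ->
  exists P : I -> I -> list T,
    forall u v, E u v -> good u v (P u v) /\ P v u = rev (P u v).
Proof.
  intros [Esym Eirr] Hrev Hex.
  set (f u v := epsilon (inhabits []) (good u v)).
  assert (Hf : forall u v, E u v -> good u v (f u v)).
  { intros u v Huv. apply epsilon_spec, Hex, Huv. }
  exists (fun u v => if excluded_middle_informative (orient u v = (u, v))
                     then f u v else rev (f v u)).
  intros u v Huv.
  assert (Hne : (u, v) <> (v, u)).
  { intros Heq. injection Heq as ->. exact (Eirr _ Huv). }
  rewrite (orient_comm v u).
  destruct (excluded_middle_informative (orient u v = (u, v))) as [Ho|Ho];
  destruct (excluded_middle_informative (orient u v = (v, u))) as [Ho'|Ho'].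
  - congruence.
  - split; [apply Hf; auto | reflexivity].
  - split; [apply Hrev, Hf; auto | symmetry; apply rev_involutive].
  - destruct (orient_spec u v); contradiction.
Qed.

End Orientation.

Lemma skel_adj_sym (X : Type) (A : X -> X -> Prop) r lam k :
  symmetric X A -> symmetric _ (skel_adj X A r lam k).
Proof.
  intros A_sym b c [Hne (x & y & Hx & Hy & Hxy)].
  split; [auto | exists y, x; auto].
Qed.

Section Blocks.
Context {X : Type} {A : X -> X -> Prop} {r : X} {lam : R} {k : nat}.
Hypothesis A_sym : symmetric X A.
Hypothesis lam_pos : (0 < lam)%R.

Local Notation layer := (layer X A r lam).
Local Notation block := (skel_vert X A r lam k).

Lemma layer_unique N N' x : layer N x -> layer N' x -> N = N'.
Proof.
  intros (n & Hn & H1 & H2) (n' & Hn' & H1' & H2').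
  rewrite <- (dist_eq_unique _ _ _ _ Hn Hn') in H1', H2'.
  assert (Hle : forall P Q : Z, (IZR P * lam < INR n)%R -> (INR n <= (IZR Q + 1) * lam)%R ->
                  (P <= Q)%Z).
  { intros P Q HP HQ. apply Z.lt_succ_r, lt_IZR. rewrite succ_IZR.
    apply (Rmult_lt_reg_r lam); lra. }
  apply Z.le_antisymm; auto.
Qed.

Lemma block_absorbs (B Y : X -> Prop) N a :
  is_block X A r lam k B -> B a -> Y a -> k_connected X A k Y ->
  (forall x, Y x -> layer N x) -> forall x, Y x -> B x.
Proof.
  intros (NB & HBl & _ & HBk & Hmax) Ba Ya HYk HYl.
  assert (NB = N) as -> by (apply (layer_unique NB N a); auto).
  intros x Hx. apply (Hmax (fun x => B x \/ Y x)); [auto | | | right; exact Hx].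
  - intros y [Hy|Hy]; auto.
  - apply (k_connected_union k B Y a); auto.
Qed.

Lemma block_unique (B C : X -> Prop) a :
  is_block X A r lam k B -> is_block X A r lam k C -> B a -> C a -> B = C.
Proof.
  intros HB HC Ba Ca.
  pose proof HB as (NB & HBl & _ & HBk & _). pose proof HC as (NC & HCl & _ & HCk & _).
  apply functional_extensionality; intro x. apply propositional_extensionality.
  split; [apply (block_absorbs C B NB a) | apply (block_absorbs B C NC a)]; auto.
Qed.

Lemma skel_vert_eq (b c : block) a : proj1_sig b a -> proj1_sig c a -> b = c.
Proof.
  destruct b as [B HB], c as [C HC]; simpl; intros Ba Ca.
  apply subset_eq_compat. apply (block_unique B C a); auto.
Qed.

Lemma block_exists N p : layer N p -> exists b : block, proj1_sig b p.
Proof.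
  intros Hp.
  set (D := fun a b => dist_le X A a b k).
  set (C := clos_refl_trans X (restrict D (layer N)) p).
  assert (CN : forall q, C q -> layer N q).
  { intros q Hq. exact (clos_rt_restrict_closed _ _ p q Hq Hp). }
  assert (HB : is_block X A r lam k C).
  { exists N. split; [exact CN|]. split; [exists p; apply rt_refl|]. split.
    - intros x y Hx Hy. apply (clos_rt_restrict_class D (layer N) p); auto.
      intros a b; apply dist_le_sym, A_sym.
    - intros Y HCY HYN HYk x Hx.
      apply (clos_rt_mono (restrict D Y)); [firstorder|].
      apply HYk; auto. apply HCY, rt_refl. }
  exists (exist _ C HB). apply rt_refl.
Qed.

Lemma block_mem_of_close (b : block) N a p :
  proj1_sig b a -> layer N a -> layer N p -> dist_le X A a p k -> proj1_sig b p.
Proof.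
  destruct b as [B HB]; simpl; intros Ba Ha Hp Hap.
  apply (block_absorbs B (fun x => x = a \/ x = p) N a HB Ba); auto.
  - intros x y Hx Hy. apply rt_step. repeat split; auto.
    pose proof (dist_le_sym A_sym _ _ _ Hap).
    destruct Hx as [-> | ->], Hy as [-> | ->]; auto using dist_le_refl.
  - intros x [-> | ->]; auto.
Qed.

Lemma skel_dist_le1_of_adj (b c : block) a p :
  A a p -> proj1_sig b a -> proj1_sig c p -> dist_le _ (skel_adj X A r lam k) b c 1.
Proof.
  intros Hap Ha Hp. destruct (classic (proj1_sig b = proj1_sig c)) as [E|E].
  - replace c with b by (destruct b, c; apply subset_eq_compat; exact E).
    apply dist_le_refl.
  - apply dist_le_adj. split; [exact E | exists a, p; auto].
Qed.

End Blocks.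

Section Thickening.
Context {X : Type} {A : X -> X -> Prop} {r : X} {lam : R}.
Hypothesis A_sym : symmetric X A.

Local Notation block := (skel_vert X A r lam 2).

Definition nbhd (S : block -> Prop) (x : X) : Prop :=
  exists b, S b /\ exists a, proj1_sig b a /\ dist_le X A a x 1.

Local Notation linked S := (clos_refl_trans X (restrict A (nbhd S))).

Lemma nbhd_of_mem (S : block -> Prop) b a : S b -> proj1_sig b a -> nbhd S a.
Proof. intros Sb Ba. exists b; split; auto. exists a; split; auto using dist_le_refl. Qed.

Lemma nbhd_mono (S T : block -> Prop) :
  (forall b, S b -> T b) -> forall x, nbhd S x -> nbhd T x.
Proof. intros ST x (b & Sb & Hb). exists b; auto. Qed.

Lemma linked_in_block (S : block -> Prop) b a a' :
  S b -> proj1_sig b a -> proj1_sig b a' -> linked S a a'.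
Proof.
  intros Sb Ba Ba'. destruct (proj2_sig b) as (_ & _ & _ & Hk & _).
  apply (clos_rt_lift (restrict (fun c c' => dist_le X A c c' 2) (proj1_sig b)));
    [|apply Hk; auto].
  intros c c' (Bc & Bc' & m & Hm & Hw).
  assert (Nc : nbhd S c) by (eapply nbhd_of_mem; eauto).
  assert (Nc' : nbhd S c') by (eapply nbhd_of_mem; eauto).
  destruct m as [|[|[|m]]]; [| | |lia].
  - inversion Hw; subst. apply rt_refl.
  - inversion Hw as [|? ? ? ? Hcc' Hw1]; subst. inversion Hw1; subst.
    apply rt_step. repeat split; auto.
  - inversion Hw as [|? q ? ? Hcq Hw1]; subst.
    inversion Hw1 as [|? ? ? ? Hqc' Hw2]; subst. inversion Hw2; subst.
    assert (Nq : nbhd S q) by (exists b; split; auto; exists c; auto using dist_le_adj).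
    apply rt_trans with q; apply rt_step; repeat split; auto.
Qed.

Lemma linked_blocks (S : block -> Prop) b b' a a' :
  clos_refl_trans _ (restrict (skel_adj X A r lam 2) S) b b' -> S b ->
  proj1_sig b a -> proj1_sig b' a' -> linked S a a'.
Proof.
  intros H. revert a. apply clos_rt_rt1n in H.
  induction H as [b|b c b' (Sb & Sc & _ & x & y & Bx & Cy & Axy) _ IH];
    intros a Sb0 Ba Ba'.
  - eapply linked_in_block; eauto.
  - apply rt_trans with x; [eapply linked_in_block; eauto|].
    apply rt_trans with y; [|apply IH; auto].
    apply rt_step; repeat split; eauto using nbhd_of_mem.
Qed.

Lemma nbhd_linked_to_mem (S : block -> Prop) x :
  nbhd S x -> exists b a, S b /\ proj1_sig b a /\ linked S a x.
Proof.
  intros Hx. pose proof Hx as (b & Sb & a & Ba & m & Hm & Hw).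
  exists b, a. split; [exact Sb|]. split; [exact Ba|].
  destruct m as [|[|m]]; [| |lia].
  - inversion Hw; subst. apply rt_refl.
  - inversion Hw as [|? ? ? ? Hax Hw1]; subst. inversion Hw1; subst.
    apply rt_step. repeat split; eauto using nbhd_of_mem.
Qed.

Lemma nbhd_connected (S : block -> Prop) :
  connected_subgraph _ (skel_adj X A r lam 2) S -> connected_subgraph X A (nbhd S).
Proof.
  intros [[b Sb] HS]. split.
  - destruct (proj2_sig b) as (_ & _ & [a Ba] & _). exists a. eapply nbhd_of_mem; eauto.
  - intros x y Hx Hy. change (linked S x y).
    destruct (nbhd_linked_to_mem S x Hx) as (b1 & a1 & Sb1 & Ba1 & Hx1).
    destruct (nbhd_linked_to_mem S y Hy) as (b2 & a2 & Sb2 & Ba2 & Hy2).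
    apply rt_trans with a1; [apply clos_rt_sym; [apply restrict_sym, A_sym | exact Hx1]|].
    apply rt_trans with a2; [|exact Hy2].
    apply (linked_blocks S b1 b2); auto.
Qed.

Lemma nbhd_path_joining (l : list block) (S1 S2 : block -> Prop) :
  path_joining _ (skel_adj X A r lam 2) l S1 S2 ->
  exists p, path_joining X A p (nbhd S1) (nbhd S2) /\
            forall z, In z p -> nbhd (fun b => In b l) z.
Proof.
  intros (b1 & b2 & Hh & Hl & S1b & S2b & _ & Hc).
  assert (In1 : In b1 l) by (destruct l; [discriminate | injection Hh as ->; left; auto]).
  assert (In2 : In b2 l) by (subst b2; apply in_last; destruct l; discriminate).
  destruct (proj2_sig b1) as (_ & _ & [a1 Ba1] & _).
  destruct (proj2_sig b2) as (_ & _ & [a2 Ba2] & _).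
  assert (L : linked (fun b => In b l) a1 a2).
  { apply (linked_blocks _ b1 b2); auto. apply (clos_rt_of_chain _ l b1); auto. }
  assert (N1 : nbhd (fun b => In b l) a1) by exact (nbhd_of_mem _ b1 a1 In1 Ba1).
  destruct (path_of_clos_rt _ a1 a2 L N1) as (p & Hh' & Hl' & Hnd & Hc' & Hin).
  exists p. split; [|exact Hin].
  exists a1, a2. repeat split; auto; eapply nbhd_of_mem; eauto.
Qed.

End Thickening.

Definition level (n : nat) : Z := ((Z.of_nat n - 1) / 2)%Z.

Lemma level_spec N n :
  (IZR N * 2 < INR n /\ INR n <= (IZR N + 1) * 2)%R <-> N = level n.
Proof.
  unfold level. rewrite INR_IZR_INZ. split.
  - intros [H1 H2].
    assert (N * 2 < Z.of_nat n)%Z by (apply lt_IZR; rewrite mult_IZR; lra).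
    assert (Z.of_nat n <= (N + 1) * 2)%Z by (apply le_IZR; rewrite mult_IZR, plus_IZR; lra).
    Z.div_mod_to_equations. lia.
  - intros ->. set (m := Z.of_nat n).
    assert (H1 : ((m - 1) / 2 * 2 < m)%Z) by (Z.div_mod_to_equations; lia).
    assert (H2 : (m <= ((m - 1) / 2 + 1) * 2)%Z) by (Z.div_mod_to_equations; lia).
    apply IZR_lt in H1. apply IZR_le in H2.
    rewrite mult_IZR in H1. rewrite mult_IZR, plus_IZR in H2. lra.
Qed.

Lemma level_pigeonhole d0 d1 d2 :
  (d1 <= S d0 -> d0 <= S d1 -> d2 <= S d1 -> d1 <= S d2 ->
   level d0 = level d1 \/ level d0 = level d2 \/ level d1 = level d2)%nat.
Proof. unfold level; intros. Z.div_mod_to_equations. lia. Qed.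

Section Scale2.
Context {X : Type} {A : X -> X -> Prop} {r : X}.
Hypothesis A_sym : symmetric X A.

Local Notation block := (skel_vert X A r 2 2).
Local Notation skel_adj := (skel_adj X A r 2 2).

Let two_pos : (0 < 2)%R.
Proof. lra. Qed.

Lemma layer2_iff N x : layer X A r 2 N x <-> exists n, dist_eq X A r x n /\ N = level n.
Proof.
  unfold layer. split; intros (n & Hn & H); exists n; split; auto; apply level_spec; auto.
Qed.

Lemma walk2_progress (b : block) a p1 p2 :
  proj1_sig b a -> A a p1 -> A p1 p2 ->
  proj1_sig b p1 \/ exists c : block, proj1_sig c p2 /\ dist_le _ skel_adj b c 1.
Proof.
  intros Ba H1 H2.
  assert (L : forall x d, dist_eq X A r x d -> layer X A r 2 (level d) x)
    by (intros x d Hd; apply layer2_iff; eauto).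
  destruct (proj2_sig b) as (N & HbN & _).
  destruct (proj1 (layer2_iff N a) (HbN a Ba)) as (d0 & D0 & ->).
  destruct (dist_eq_adj A_sym r a p1 d0 D0 H1) as (d1 & D1 & ? & ?).
  destruct (dist_eq_adj A_sym r p1 p2 d1 D1 H2) as (d2 & D2 & ? & ?).
  assert (Ha2 : dist_le X A a p2 2).
  { exists 2%nat. split; auto. econstructor; eauto. econstructor; eauto. constructor. }
  destruct (level_pigeonhole d0 d1 d2) as [E|[E|E]]; try lia.
  - left. apply (block_mem_of_close A_sym two_pos b (level d0) a p1); auto.
    + rewrite E; auto.
    + apply dist_le_mono with 1%nat; [apply dist_le_adj; auto | lia].
  - right. exists b. split; [|apply dist_le_refl].
    apply (block_mem_of_close A_sym two_pos b (level d0) a p2); auto.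
    rewrite E; auto.
  - right. destruct (block_exists (k := 2) A_sym (level d1) p1 (L _ _ D1)) as [c Hc].
    exists c. split; [|exact (skel_dist_le1_of_adj b c a p1 H1 Ba Hc)].
    apply (block_mem_of_close A_sym two_pos c (level d1) p1 p2); auto.
    + rewrite E; auto.
    + apply dist_le_mono with 1%nat; [apply dist_le_adj; auto | lia].
Qed.

Lemma skel_dist_le_of_walkn L : forall a a' (b b' : block) m,
  walkn X A a a' L -> proj1_sig b a -> proj1_sig b' a' -> (L <= 2 * m)%nat ->
  dist_le _ skel_adj b b' m.
Proof.
  induction L as [L IH] using lt_wf_ind; intros a a' b b' m Hw Ba Ba' Hm.
  destruct L as [|[|L]].
  - inversion Hw; subst. rewrite (skel_vert_eq two_pos b b' a'); auto. apply dist_le_refl.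
  - inversion Hw as [|? p1 ? ? H1 Hw1]; subst. inversion Hw1; subst.
    apply dist_le_mono with 1%nat; [exact (skel_dist_le1_of_adj b b' a a' H1 Ba Ba') | lia].
  - inversion Hw as [|? p1 ? ? H1 Hw1]; subst. inversion Hw1 as [|? p2 ? ? H2 Hw2]; subst.
    destruct (walk2_progress b a p1 p2 Ba H1 H2) as [Bp1 | (c & Cp2 & Hbc)].
    + apply (IH (S L)) with p1 a'; auto; lia.
    + destruct m as [|m]; [lia|]. change (S m) with (1 + m)%nat.
      apply dist_le_trans with c; [exact Hbc|].
      apply (IH L) with p2 a'; auto; lia.
Qed.

Lemma nbhd_r_disjoint M (S T : block -> Prop) :
  (3 <= M)%nat -> r_disjoint _ skel_adj M S T -> r_disjoint X A (M + 1) (nbhd S) (nbhd T).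
Proof.
  intros HM H x y (b & Sb & a & Ba & Hax) (c & Tc & a' & Ca' & Ha'y) Hxy.
  assert (Haa' : dist_le X A a a' (1 + (M + 1) + 1)).
  { apply dist_le_trans with y; [apply dist_le_trans with x; auto|].
    apply dist_le_sym; auto. }
  destruct Haa' as (m & Hm & Hw).
  apply (H b c Sb Tc). apply (skel_dist_le_of_walkn m a a' b c M); auto. lia.
Qed.

Theorem fat_minor_of_skeleton22_minor (VH : Type) (adjH : VH -> VH -> Prop) M :
  simple_graph VH adjH -> (3 <= M)%nat ->
  fat_minor VH adjH block skel_adj M -> fat_minor VH adjH X A (M + 1).
Proof.
  intros HH HM (B & P & HBc & HP & Hvv & Hee & Hve).
  set (on_path u v := fun b => In b (P u v)).
  set (good u v p := path_joining X A p (nbhd (B u)) (nbhd (B v)) /\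
                     forall z, In z p -> nbhd (on_path u v) z).
  destruct (reversible_choice adjH good HH) as (P' & HP').
  - intros u v p Huv [Hp Hz]. split; [apply path_joining_rev; auto|].
    intros z Hz'. rewrite <- in_rev in Hz'. apply (nbhd_mono (on_path u v)); auto.
    intros b Hb. unfold on_path. rewrite (proj2 (HP u v Huv)), <- in_rev. exact Hb.
  - intros u v Huv. apply nbhd_path_joining, HP, Huv.
  - exists (fun v => nbhd (B v)), P'. split; [|split; [|split; [|split]]].
    + intro v. apply nbhd_connected; auto.
    + intros u v Huv. split; apply HP'; auto.
    + intros u v Huv. apply nbhd_r_disjoint; auto.
    + intros u v u' v' Huv Hu'v' Hne.
      apply (r_disjoint_mono _ (nbhd (on_path u v)) (nbhd (on_path u' v')));
        [apply nbhd_r_disjoint, Hee; auto | apply HP'; auto | apply HP'; auto].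
    + intros w u v Huv Hwu Hwv.
      apply (r_disjoint_mono _ (nbhd (B w)) (nbhd (on_path u v)));
        [apply nbhd_r_disjoint, Hve; auto | auto | apply HP'; auto].
Qed.

End Scale2.

Open Scope R_scope.

Theorem corollary10
  (V : Type) (adj : V -> V -> Prop) (x0 : V)
  (HG : simple_graph V adj) (Hconn : connected_graph V adj)
  (Hunb : unbounded_graph V adj x0)
  (lam : R) (k : nat) (Hlam : 1 <= lam) (Hk : (1 <= k)%nat)
  (r : skel_vert V adj x0 lam k) (Hr : proj1_sig r x0)
  (VH : Type) (adjH : VH -> VH -> Prop) (HH : simple_graph VH adjH)
  (M : nat) (HM : (6 <= M)%nat) :
  fat_minor VH adjH
    (skel_vert (skel_vert V adj x0 lam k) (skel_adj V adj x0 lam k) r 2 2)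
    (skel_adj (skel_vert V adj x0 lam k) (skel_adj V adj x0 lam k) r 2 2) M ->
  fat_minor VH adjH (skel_vert V adj x0 lam k) (skel_adj V adj x0 lam k) (M + 1).
Proof.
  apply fat_minor_of_skeleton22_minor; [apply skel_adj_sym; exact (proj1 HG) | exact HH | lia].
Qed.
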